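(* Inner p-reflexivity fails in general: there exist a language $L$, an $L$-algebra $\mathfrak A$ with universe $A$, and elements $a,c\in A$ such that $a:a\not\approx_{\mathfrak A}c:c$.
   Context: Let $L$ be a language of algebras: a set of function symbols, each with an arity in $\mathbb N$ (constants are 0-ary function symbols). Fix a countably infinite set $X$ of variables; $T_{L,X}$ is the set of $L$-terms over $X$, and $X(s)$ denotes the set of variables occurring in a term $s$. For an $L$-algebra $\mathfrak A$ with universe $A$, every term $s$ induces a function $s^{\mathfrak A}$, evaluated at assignments of elements of $A$ to variables. An arrow of $\mathfrak A$ is a pair $(a,b)\in A\times A$, written $a\to b$. The generalizations of an arrow $a\to b$ in $\mathfrak A$ are the pairs of arbitrary terms $s\to t$ with $s,t\in T_{L,X}$ such that there is an assignment $\sigma$ of elements of $A$ to the variables in $X(s)\cup X(t)$ with $s^{\mathfrak A}(\sigma)=a$ and $t^{\mathfrak A}(\sigma)=b$; their set is denoted $\uparrow_{\mathfrak A}(a\to b)$. For $L$-algebras $\mathfrak A,\mathfrak B$, an arrow $a\to b$ of $\mathfrak A$ and an arrow $c\to d$ of $\mathfrak B$, set $(a\to b)\uparrow_{(\mathfrak A,\mathfrak B)}(c\to d):=\uparrow_{\mathfrak A}(a\to b)\cap\uparrow_{\mathfrak B}(c\to d)$. A pair of terms $s\to t$ is trivial in $(\mathfrak A,\mathfrak B)$ if it belongs to $\uparrow_{\mathfrak A}(e)$ for every arrow $e$ of $\mathfrak A$ and to $\uparrow_{\mathfrak B}(e')$ for every arrow $e'$ of $\mathfrak B$. We write $a\to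 b\lesssim_{(\mathfrak A,\mathfrak B)}c\to d$ iff either (i) every element of $\uparrow_{\mathfrak A}(a\to b)\cup\uparrow_{\mathfrak B}(c\to d)$ is trivial in $(\mathfrak A,\mathfrak B)$, or (ii) $(a\to b)\uparrow_{(\mathfrak A,\mathfrak B)}(c\to d)$ contains an element not trivial in $(\mathfrak A,\mathfrak B)$ and, for every arrow $c'\to d'$ of $\mathfrak B$, the inclusion $(a\to b)\uparrow_{(\mathfrak A,\mathfrak B)}(c\to d)\subseteq(a\to b)\uparrow_{(\mathfrak A,\mathfrak B)}(c'\to d')$ implies equality of these two sets. Define $a\to b\approx_{(\mathfrak A,\mathfrak B)}c\to d$ iff $a\to b\lesssim_{(\mathfrak A,\mathfrak B)}c\to d$ and $c\to d\lesssim_{(\mathfrak B,\mathfrak A)}a\to b$. For $a,b\in A$ and $c,d\in B$, the similarity-based analogical proportion $a:b\approx_{(\mathfrak A,\mathfrak B)}c:d$ holds iff $a\to b\approx_{(\mathfrak A,\mathfrak B)}c\to d$ and $b\to a\approx_{(\mathfrak A,\mathfrak B)}d\to c$. We write $\approx_{\mathfrak A}$ for $\approx_{(\mathfrak A,\mathfrak A)}$. *)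

From mathcomp Require Import all_boot.

Set Implicit Arguments.
Unset Strict Implicit.
Unset Printing Implicit Defensive.

Record language := Language { symbol : Type; arity : symbol -> nat }.

(* Terms over the countably infinite variable set X := nat. *)
Inductive term (L : language) : Type :=
| Var : nat -> term L
| App : forall f : symbol L, ('I_(arity f) -> term L) -> term L.

Record algebra (L : language) := Algebra {
  carrier :> Type;
  interp : forall f : symbol L, ('I_(arity f) -> carrier) -> carrier }.

Fixpoint eval (L : language) (A : algebra L) (sigma : nat -> A) (s : term L) : A :=
  match s with
  | Var x => sigma x
  | App f ts => @interp L A f (fun i => eval sigma (ts i))
  end.

Definition tpair (L : language) := (term L * term L)%type.

Definition gen (L : language) (A : algebra L) (a b : A) (p : tpair L) : Prop :=
  exists sigma : nat -> A, eval sigma p.1 = a /\ eval sigma p.2 = b.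

Definition gen2 (L : language) (A B : algebra L) (a b : A) (c d : B) (p : tpair L) : Prop :=
  gen a b p /\ gen c d p.

Definition trivial (L : language) (A B : algebra L) (p : tpair L) : Prop :=
  (forall a b : A, gen a b p) /\ (forall c d : B, gen c d p).

Definition lesssim (L : language) (A B : algebra L) (a b : A) (c d : B) : Prop :=
  (forall p, (gen a b p \/ gen c d p) -> trivial A B p)
  \/
  ((exists p, gen2 a b c d p /\ ~ trivial A B p) /\
   (forall c' d' : B,
      (forall p, gen2 a b c d p -> gen2 a b c' d' p) ->
      (forall p, gen2 a b c' d' p -> gen2 a b c d p))).

Definition approx (L : language) (A B : algebra L) (a b : A) (c d : B) : Prop :=
  lesssim a b c d /\ lesssim c d a b.

Definition analogy (L : language) (A B : algebra L) (a b : A) (c d : B) : Prop :=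
  approx a b c d /\ approx b a d c.

From mathcomp Require Import all_boot.

(* Take the Boolean algebra with a single constant interpreted as [true].
   The constant term pair [k -> k] generalizes [true -> true] but not
   [false -> false], while the non-trivial pair [x -> x] generalizes every
   diagonal arrow; this rules out both clauses of [true -> true ≲ false -> false]. *)

Set Implicit Arguments.
Unset Strict Implicit.
Unset Printing Implicit Defensive.

Section SingleAlgebra.

Variables (L : language) (A : algebra L).

Lemma gen_var_diag (x : nat) (a : A) : gen a a (Var L x, Var L x).
Proof. by exists (fun _ => a). Qed.

Lemma nontrivial_var_diag (x : nat) (a b : A) :
  a <> b -> ~ trivial A A (Var L x, Var L x).
Proof. by move=> neq_ab [/(_ a b) [sigma [/= ea eb]] _]; apply: neq_ab; rewrite -ea -eb. Qed.

(* Within one algebra, the second clause of [≲] applied with [c' -> d' := a -> b]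
   forces [↑(a -> b) ⊆ ↑(c -> d)]. *)
Lemma lesssim_gen_sub (a b c d : A) :
  lesssim (B:=A) a b c d ->
  (forall p, gen a b p -> trivial A A p) \/ (forall p, gen a b p -> gen c d p).
Proof.
case=> [all_trivial | [_ maximal]]; first by left=> p abp; apply: all_trivial; left.
right=> p abp.
have sub_ab : forall p, gen2 a b c d p -> gen2 a b a b p by move=> q [abq _].
by case: (maximal a b sub_ab p (conj abp abp)).
Qed.

Lemma not_lesssim_diag (a c : A) (p : tpair L) :
  (exists b : A, b <> a) -> gen a a p -> ~ gen c c p ->
  ~ lesssim (B:=A) a a c c.
Proof.
move=> [b neq_ba] aap not_ccp /lesssim_gen_sub [all_trivial | sub].
- exact: nontrivial_var_diag neq_ba (all_trivial _ (gen_var_diag 0 a)).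
- exact: not_ccp (sub p aap).
Qed.

End SingleAlgebra.

Definition const_language : language := @Language unit (fun _ => 0).

Definition bool_const_true : algebra const_language :=
  @Algebra const_language bool (fun _ _ => true).

Definition const_term : term const_language :=
  @App const_language tt (fun _ => Var const_language 0).

Lemma gen_const_term (a b : bool_const_true) :
  gen a b (const_term, const_term) <-> a = true /\ b = true.
Proof.
split; first by move=> [sigma [<- <-]].
by move=> [-> ->]; exists (fun _ => true).
Qed.

Theorem theorem3 :
  exists (L : language) (A : algebra L) (a c : A), ~ analogy (A:=A) (B:=A) a a c c.
Proof.
exists const_language, bool_const_true, true, false.
move=> [[lesssim_tf _] _].
apply: not_lesssim_diag lesssim_tf.
- by exists false.
- exact/gen_const_term.
- by move/gen_const_term=> [].
Qed.
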